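(* Let $\mathcal{L}$ be a finite algebraic language and $\mathcal{V}$ an equational class of $\mathcal{L}$-algebras. A finite set $\Sigma$ of $\mathcal{L}$-identities is exact in $\mathcal{V}$ if and only if the finitely presented algebra $\mathbf{Fp}_{\mathcal{V}}(\Sigma,\mathrm{Var}(\Sigma))$ is isomorphic to a subalgebra of $\mathbf{F}_{\mathcal{V}}(\omega)$.
   Context: $\mathbf{Fm}_{\mathcal{L}}(Y)$ is the formula algebra over variables $Y$ ($\omega$ = the countably infinite set of all variables); $\mathrm{Var}(\Sigma)$ is the set of variables occurring in $\Sigma$. $\mathbf{F}_{\mathcal{V}}(Y)$ is the free algebra of $\mathcal{V}$ over $Y$ and $h_{\mathcal{V}}\colon\mathbf{Fm}_{\mathcal{L}}(Y)\to\mathbf{F}_{\mathcal{V}}(Y)$ the canonical homomorphism. For a finite set $X\supseteq\mathrm{Var}(\Sigma)$, $\mathbf{Fp}_{\mathcal{V}}(\Sigma,X)$ is the quotient $\mathbf{F}_{\mathcal{V}}(X)/\Theta_\Sigma$, where $\Theta_\Sigma$ is the congruence generated by $\{(h_{\mathcal{V}}(\varphi),h_{\mathcal{V}}(\psi))\mid\varphi\approx\psi\in\Sigma\}$. $\Sigma$ is exact in $\mathcal{V}$ if there is a substitution (homomorphism) $\sigma\colon\mathbf{Fm}_{\mathcal{L}}(\mathrm{Var}(\Sigma))\to\mathbf{Fm}_{\mathcal{L}}(\omega)$ such that for all $\varphi,\psi\in\mathbf{Fm}_{\mathcal{L}}(\mathrm{Var}(\Sigma))$: $\mathcal{V}\models\Sigma\Rightarrow\varphi\approx\psi$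 (i.e., the quasi-identity $\bigwedge\Sigma\to\varphi\approx\psi$ holds in every algebra of $\mathcal{V}$) iff $\mathcal{V}\models\sigma(\varphi)\approx\sigma(\psi)$. *)

From Stdlib Require Import ClassicalEpsilon List.
From mathcomp Require Import all_boot.

Set Implicit Arguments.
Unset Strict Implicit.
Unset Printing Implicit Defensive.

Record language := Language {
  op_sym :> finType;
  arity : op_sym -> nat }.

Section UA.
Variable L : language.

Inductive term (X : Type) : Type :=
| tvar : X -> term X
| tapp : forall f : L, ('I_(arity f) -> term X) -> term X.
Arguments tvar {X} _.
Arguments tapp {X} f _.

Record algebra := Algebra {
  carrier :> Type;
  interp : forall f : L, ('I_(arity f) -> carrier) -> carrier }.
Arguments interp : clear implicits.

Fixpoint eval (A : algebra) (X : Type) (v : X -> A) (t : term X) : A :=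
  match t with
  | tvar x => v x
  | tapp f a => interp A f (fun i => eval v (a i))
  end.

Fixpoint subst (X Y : Type) (s : X -> term Y) (t : term X) : term Y :=
  match t with
  | tvar x => s x
  | tapp f a => tapp f (fun i => subst s (a i))
  end.

Fixpoint occurs (n : nat) (t : term nat) : Prop :=
  match t with
  | tvar m => n = m
  | tapp f a => exists i, occurs n (a i)
  end.

(* identities are pairs of terms over the variables omega = nat *)
Definition identity := (term nat * term nat)%type.

Definition satisfies (A : algebra) (e : identity) : Prop :=
  forall v : nat -> A, eval v e.1 = eval v e.2.

Definition equational_class (V : algebra -> Prop) : Prop :=
  exists E : identity -> Prop,
    forall A : algebra, V A <-> (forall e, E e -> satisfies A e).

Definition V_models (V : algebra -> Prop) (t s : term nat) : Prop :=
  forall A : algebra, V A -> satisfies A (t, s).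

Definition V_qmodels (V : algebra -> Prop) (Sigma : seq identity)
    (t s : term nat) : Prop :=
  forall A : algebra, V A -> forall v : nat -> A,
    (forall e, List.In e Sigma -> eval v e.1 = eval v e.2) ->
    eval v t = eval v s.

Definition VarS (Sigma : seq identity) (n : nat) : Prop :=
  exists e, List.In e Sigma /\ (occurs n e.1 \/ occurs n e.2).

Definition over (Y : nat -> Prop) (t : term nat) : Prop :=
  forall n, occurs n t -> Y n.

Definition exact (V : algebra -> Prop) (Sigma : seq identity) : Prop :=
  exists sigma : nat -> term nat,
    forall phi psi : term nat, over (VarS Sigma) phi -> over (VarS Sigma) psi ->
      (V_qmodels V Sigma phi psi <-> V_models V (subst sigma phi) (subst sigma psi)).

Lemma over_tapp (Y : nat -> Prop) (f : L) (a : 'I_(arity f) -> term nat) :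
  (forall i, over Y (a i)) -> over Y (tapp f a).
Proof. by move=> H n [i Hi]; apply: (H i). Qed.

Definition Fm (Y : nat -> Prop) : algebra :=
  {| carrier := {t : term nat | over Y t};
     interp := fun f a =>
       exist (over Y) (tapp f (fun i => proj1_sig (a i)))
             (over_tapp (fun i => proj2_sig (a i))) |}.

Inductive cg (A : algebra) (R : A -> A -> Prop) : A -> A -> Prop :=
| cg_base x y : R x y -> cg R x y
| cg_refl x : cg R x x
| cg_sym x y : cg R x y -> cg R y x
| cg_trans x y z : cg R x y -> cg R y z -> cg R x z
| cg_app (f : L) (a b : 'I_(arity f) -> A) :
    (forall i, cg R (a i) (b i)) -> cg R (interp A f a) (interp A f b).

Definition qcarrier (A : algebra) (R : A -> A -> Prop) : Type :=
  {P : A -> Prop | exists a, P = cg R a}.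

Definition qclass (A : algebra) (R : A -> A -> Prop) (a : A) : qcarrier R :=
  exist (fun P => exists a, P = cg R a) (cg R a) (ex_intro _ a erefl).

Definition qrepr (A : algebra) (R : A -> A -> Prop) (x : qcarrier R) : A :=
  proj1_sig (constructive_indefinite_description _ (proj2_sig x)).

Definition quot (A : algebra) (R : A -> A -> Prop) : algebra :=
  {| carrier := qcarrier R;
     interp := fun f a => qclass R (interp A f (fun i => qrepr (a i))) |}.

Definition thetaV (V : algebra -> Prop) (Y : nat -> Prop) (t s : Fm Y) : Prop :=
  V_models V (proj1_sig t) (proj1_sig s).

Definition FV (V : algebra -> Prop) (Y : nat -> Prop) : algebra :=
  quot (thetaV V (Y := Y)).

Definition hV (V : algebra -> Prop) (Y : nat -> Prop) (t : Fm Y) : FV V Y :=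
  qclass (thetaV V (Y := Y)) t.

Definition omega : nat -> Prop := fun _ => True.

Definition SigmaRel (V : algebra -> Prop) (Sigma : seq identity) (X : nat -> Prop)
    (x y : FV V X) : Prop :=
  exists e, List.In e Sigma /\
    exists t s : Fm X, proj1_sig t = e.1 /\ proj1_sig s = e.2 /\
      x = hV V t /\ y = hV V s.

Definition Fp (V : algebra -> Prop) (Sigma : seq identity) (X : nat -> Prop)
  : algebra := quot (@SigmaRel V Sigma X).

Definition subuniverse (B : algebra) (S : B -> Prop) : Prop :=
  forall (f : L) (a : 'I_(arity f) -> B), (forall i, S (a i)) -> S (interp B f a).

Definition is_hom (A B : algebra) (h : A -> B) : Prop :=
  forall (f : L) (a : 'I_(arity f) -> A),
    h (interp A f a) = interp B f (fun i => h (a i)).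

Definition iso_to_subalgebra (A B : algebra) : Prop :=
  exists S : B -> Prop, subuniverse S /\
    exists h : A -> B,
      is_hom h /\ injective h /\ (forall x, S (h x)) /\
      (forall y, S y -> exists x, h x = y).

End UA.

(* Write X = Var(Sigma) and [present] : Fm(X) -> Fp_V(Sigma, X) for the canonical
   surjection.  Since Fp_V(Sigma, X) lies in V, present phi = present psi holds exactly
   when V |= Sigma => phi ~ psi.  If sigma witnesses exactness, phi |-> [sigma phi]
   therefore factors through [present] as an injective homomorphism into F_V(omega).
   Conversely, an embedding h sends each generator present x to the class of some term
   sigma x; then [sigma phi] = h (present phi) for every phi, and injectivity of h turns
   this into exactness of Sigma. *)
From Stdlib Require Import ClassicalEpsilon ProofIrrelevance FunctionalExtensionality
  PropExtensionality.
From Pilot Require Import Defs.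
From mathcomp Require Import all_boot.

Set Implicit Arguments.
Unset Strict Implicit.
Unset Printing Implicit Defensive.

Lemma sig_inj (T : Type) (P : T -> Prop) (x y : sig P) :
  proj1_sig x = proj1_sig y -> x = y.
Proof. by move=> E; apply: eq_sig_hprop E => ? ? ?; apply: proof_irrelevance. Qed.

Section Homomorphisms.
Variable L : language.
Implicit Types A B C : algebra L.

Lemma hom_comp A B C (g : A -> B) (h : B -> C) :
  is_hom g -> is_hom h -> is_hom (h \o g).
Proof. by move=> hom_g hom_h f a /=; rewrite hom_g hom_h. Qed.

Lemma hom_eval A B (h : A -> B) :
  is_hom h -> forall (v : nat -> A) (t : term L nat), h (eval v t) = eval (h \o v) t.
Proof.
move=> hom_h v t; elim: t => [n|f a IH] //=.
by rewrite hom_h; congr (interp _); apply: functional_extensionality.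
Qed.

Lemma eval_subst A (v : nat -> A) (s : nat -> term L nat) (t : term L nat) :
  eval v (subst s t) = eval (fun n => eval v (s n)) t.
Proof.
elim: t => [n|f a IH] //=.
by congr (interp _); apply: functional_extensionality.
Qed.

Lemma cg_hom_ker A B (R : A -> A -> Prop) (g : A -> B) :
  is_hom g -> (forall a b, R a b -> g a = g b) ->
  forall a b, cg R a b -> g a = g b.
Proof.
move=> hom_g gR a b; elim=> {a b}.
- exact: gR.
- by [].
- by move=> a b _ ->.
- by move=> a b c _ -> _ ->.
move=> f a b _ IH.
by rewrite !hom_g; congr (interp _); apply: functional_extensionality.
Qed.

Lemma factor_hom A B C (p : A -> C) (r : C -> A) (g : A -> B) :
  is_hom p -> cancel r p -> is_hom g ->
  (forall a b, p a = p b -> g a = g b) -> is_hom (g \o r).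
Proof.
move=> hom_p rK hom_g gp f x /=.
have -> : x = p \o (r \o x) by apply: functional_extensionality => i /=; rewrite rK.
rewrite -hom_p (gp _ _ (rK _)) hom_g.
by congr (interp _); apply: functional_extensionality => i /=; rewrite rK.
Qed.

Lemma inj_hom_iso_to_subalgebra A B (h : A -> B) :
  is_hom h -> injective h -> iso_to_subalgebra A B.
Proof.
move=> hom_h inj_h; exists (fun y => exists x, h x = y); split; last first.
  by exists h; split=> //; split=> //; split=> // x; exists x.
move=> f b hb.
have [a ha] : exists a : 'I_(arity f) -> A, h \o a = b.
  exists (fun i => proj1_sig (constructive_indefinite_description _ (hb i))).
  by apply: functional_extensionality => i /=; case: constructive_indefinite_description.
by exists (@interp _ A f a); rewrite hom_h -ha.
Qed.

End Homomorphisms.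

Section Quotients.
Variables (L : language) (A : algebra L) (R : A -> A -> Prop).

Lemma qclass_eq a b : qclass R a = qclass R b <-> cg R a b.
Proof.
split=> [E|ab].
  have b_in_a : proj1_sig (qclass R a) b by rewrite E; exact: cg_refl.
  exact: b_in_a.
apply: sig_inj; apply: functional_extensionality => c /=.
by apply: propositional_extensionality; split; apply: cg_trans; [apply: cg_sym|].
Qed.

Lemma qclass_qrepr : cancel (@qrepr L A R) (qclass R).
Proof.
move=> x; apply: sig_inj; rewrite /qrepr.
by case: constructive_indefinite_description.
Qed.

Lemma qrepr_qclass a : cg R (qrepr (qclass R a)) a.
Proof. by apply/qclass_eq; rewrite qclass_qrepr. Qed.

Lemma qclass_hom : is_hom (B := quot R) (qclass R).
Proof.
move=> f a /=; apply/qclass_eq/cg_app => i.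
exact/cg_sym/qrepr_qclass.
Qed.

End Quotients.

Section FreeAlgebras.
Variable L : language.

Definition varFm (X : nat -> Prop) (n : nat) (Xn : X n) : Fm L X :=
  exist (Defs.over X) (tvar L n) (fun m (mn : m = n) => eq_ind_r X Xn mn).

Lemma Fm_eval (Y : nat -> Prop) (v : nat -> Fm L Y) (t : term L nat) :
  proj1_sig (eval v t) = subst (fun n => proj1_sig (v n)) t.
Proof.
elim: t => [n|f a IH] //=.
by congr tapp; apply: functional_extensionality.
Qed.

Lemma eval_Fm_hom (A : algebra L) (Y : nat -> Prop) (v : nat -> A) :
  is_hom (fun t : Fm L Y => eval v (proj1_sig t)).
Proof. by []. Qed.

Definition gen_valuation (X : nat -> Prop) (T : Type) (g : Fm L X -> T) (d : nat -> T)
    (n : nat) : T :=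
  match excluded_middle_informative (X n) with
  | left Xn => g (varFm Xn)
  | right _ => d n
  end.

Lemma gen_valuationE X T (g : Fm L X -> T) d n (Xn : X n) :
  gen_valuation g d n = g (varFm Xn).
Proof.
rewrite /gen_valuation; case: excluded_middle_informative => [Xn'|//].
by rewrite (proof_irrelevance _ Xn Xn').
Qed.

Lemma Fm_hom_unique X (B : algebra L) (g : Fm L X -> B) (w : nat -> B) :
  is_hom g -> (forall n (Xn : X n), w n = g (varFm Xn)) ->
  forall t : Fm L X, eval w (proj1_sig t) = g t.
Proof.
move=> hom_g wg [t]; elim: t => [n|f a IH] Xt /=.
  by rewrite (wg n (Xt n erefl)); congr g; apply: sig_inj.
have Xa i : Defs.over X (a i) by move=> m m_ai; apply: Xt; exists i.
rewrite (_ : (fun i => _) = g \o (fun i => exist _ (a i) (Xa i))); last first.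
  by apply: functional_extensionality => i; apply: IH.
by rewrite -hom_g; congr g; apply: sig_inj.
Qed.

Variable V : algebra L -> Prop.

Lemma cg_thetaV (Y : nat -> Prop) (t s : Fm L Y) :
  cg (thetaV V (Y := Y)) t s -> thetaV V t s.
Proof.
move=> ts A VA v.
by apply: (cg_hom_ker (eval_Fm_hom v) _ ts) => t' s' ts'; apply: ts'.
Qed.

Lemma hV_eq (Y : nat -> Prop) (t s : Fm L Y) :
  hV V t = hV V s <-> V_models V (proj1_sig t) (proj1_sig s).
Proof. by split=> [/qclass_eq/cg_thetaV|ts]; last exact/qclass_eq/cg_base. Qed.

Lemma hV_hom (Y : nat -> Prop) : is_hom (@hV L V Y).
Proof. exact: qclass_hom. Qed.

Definition class_of_term (t : term L nat) : FV V omega :=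
  hV V (exist (Defs.over omega) t (fun _ _ => I)).

Lemma class_of_term_eq t s : class_of_term t = class_of_term s <-> V_models V t s.
Proof. exact: hV_eq. Qed.

Lemma class_of_term_tapp f (a : 'I_(arity f) -> term L nat) :
  class_of_term (tapp a) = @interp _ (FV V omega) f (class_of_term \o a).
Proof. by rewrite /class_of_term -hV_hom; congr hV; apply: sig_inj. Qed.

Lemma class_of_term_subst (s : nat -> term L nat) t :
  class_of_term (subst s t) = eval (class_of_term \o s) t.
Proof.
elim: t => [n|f a IH] //; rewrite [subst _ _]/= class_of_term_tapp.
by congr (interp _); apply: functional_extensionality.
Qed.

Lemma class_of_term_repr (x : FV V omega) : class_of_term (proj1_sig (qrepr x)) = x.
Proof. by rewrite -[RHS]qclass_qrepr; congr hV; apply: sig_inj. Qed.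

End FreeAlgebras.

Section Presentations.
Variables (L : language) (V : algebra L -> Prop) (Sigma : seq (identity L)).
Hypothesis eqV : equational_class V.

Local Notation X := (VarS Sigma).

Definition present (t : Fm L X) : Fp V Sigma X := qclass _ (hV V t).

Definition present_repr (x : Fp V Sigma X) : Fm L X := qrepr (qrepr x).

Lemma present_hom : is_hom present.
Proof. exact: hom_comp (@hV_hom L V X) (qclass_hom _). Qed.

Lemma present_reprK : cancel present_repr present.
Proof. by move=> x; rewrite /present /hV !qclass_qrepr. Qed.

Lemma Fp_in_V : V (Fp V Sigma X).
Proof.
have [E modE] := eqV; apply/modE => e Ee v.
rewrite (_ : v = present \o (present_repr \o v)); last first.
  by apply: functional_extensionality => n /=; rewrite present_reprK.
rewrite -!(hom_eval present_hom) /present; congr qclass; apply/hV_eq.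
by rewrite !Fm_eval => B VB w; rewrite !eval_subst; apply: (proj1 (modE B) VB e Ee).
Qed.

Lemma Sigma_over e : List.In e Sigma -> Defs.over X e.1 /\ Defs.over X e.2.
Proof. by move=> eS; split=> n n_e; exists e; split=> //; by [left | right]. Qed.

(* Evaluation at a model of Sigma descends first along theta_V, then along Sigma. *)
Lemma present_eq_qmodels (t s : Fm L X) :
  present t = present s -> V_qmodels V Sigma (proj1_sig t) (proj1_sig s).
Proof.
move/qclass_eq => ts A VA w w_Sigma.
pose ev (u : Fm L X) := eval w (proj1_sig u).
have ev_hV u u' : hV V u = hV V u' -> ev u = ev u' by move/hV_eq; apply.
pose g (x : FV V X) := ev (qrepr x).
have hom_g : is_hom g.
  apply: (factor_hom (@hV_hom L V X) (@qclass_qrepr _ _ _) (eval_Fm_hom w) ev_hV).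
have gE u : g (hV V u) = ev u by apply/ev_hV/qclass_qrepr.
have g_Sigma x y : SigmaRel Sigma x y -> g x = g y.
  move=> [e [eS [u [u' [ue [u'e [-> ->]]]]]]].
  by rewrite !gE /ev ue u'e; apply: w_Sigma.
by have := cg_hom_ker hom_g g_Sigma ts; rewrite !gE.
Qed.

Lemma qmodels_present_eq (t s : Fm L X) :
  V_qmodels V Sigma (proj1_sig t) (proj1_sig s) -> present t = present s.
Proof.
move=> ts; pose w := gen_valuation present (fun _ => present t).
have wE u : eval w (proj1_sig u) = present u.
  by apply: Fm_hom_unique present_hom _ u => n Xn; apply: gen_valuationE.
rewrite -(wE t) -(wE s); apply: ts; first exact: Fp_in_V.
move=> e /[dup] eS /Sigma_over [e1X e2X].
move: (wE (exist _ _ e1X)) (wE (exist _ _ e2X)) => /= -> ->.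
apply/qclass_eq/cg_base; exists e; split=> //.
by exists (exist _ _ e1X), (exist _ _ e2X).
Qed.

Lemma present_eq (t s : Fm L X) :
  present t = present s <-> V_qmodels V Sigma (proj1_sig t) (proj1_sig s).
Proof. by split; [apply: present_eq_qmodels|apply: qmodels_present_eq]. Qed.

Lemma exact_iso_to_subalgebra :
  exact V Sigma -> iso_to_subalgebra (Fp V Sigma X) (FV V omega).
Proof.
move=> [sigma sigmaP].
pose g (t : Fm L X) := class_of_term V (subst sigma (proj1_sig t)).
have g_present t s : present t = present s <-> g t = g s.
  by rewrite present_eq class_of_term_eq; apply: sigmaP; apply: proj2_sig.
have hom_g : is_hom g.
  by move=> f a; rewrite /g /= class_of_term_tapp.
have gE t : g (present_repr (present t)) = g t by apply/g_present/present_reprK.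
apply: (inj_hom_iso_to_subalgebra (h := g \o present_repr)).
  by apply: factor_hom present_hom present_reprK hom_g _ => t s /g_present.
move=> x y /=; rewrite -(present_reprK x) -(present_reprK y) !gE.
by move/g_present.
Qed.

Lemma iso_to_subalgebra_exact :
  iso_to_subalgebra (Fp V Sigma X) (FV V omega) -> exact V Sigma.
Proof.
move=> [_ [_ [h [hom_h [inj_h _]]]]].
pose sigma := gen_valuation (fun t => proj1_sig (qrepr (h (present t)))) (@tvar L nat).
have sigmaE t : class_of_term V (subst sigma (proj1_sig t)) = h (present t).
  rewrite class_of_term_subst -[RHS]/((h \o present) t).
  apply: Fm_hom_unique (hom_comp present_hom hom_h) _ t => n Xn /=.
  by rewrite /sigma gen_valuationE class_of_term_repr.
exists sigma => phi psi Xphi Xpsi.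
rewrite -(present_eq (exist _ phi Xphi) (exist _ psi Xpsi)) -class_of_term_eq.
rewrite (sigmaE (exist _ phi Xphi)) (sigmaE (exist _ psi Xpsi)).
by split=> [->|/inj_h].
Qed.

End Presentations.

Theorem lemma3p5 (L : language) (V : algebra L -> Prop)
    (Sigma : seq (identity L)) :
  equational_class V ->
  (exact V Sigma <-> iso_to_subalgebra (Fp V Sigma (VarS Sigma)) (FV V (omega))).
Proof.
move=> eqV; split; [exact: exact_iso_to_subalgebra|exact: iso_to_subalgebra_exact].
Qed.
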